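(* Let $C\in\mathcal{M}^{or}_{(r,s)}(\Delta,F)$ be an old broccoli curve, and for $x\in\{3,4,6\}$ let $n_{(x)}$ be the number of vertices of $C$ of type $(x)$. Let $e_f$ be the number of even fixed ends of $C$ and $e_n$ the number of even non-fixed ends of $C$. Then $$n_{(3)}+n_{(4)}+e_n=n_{(6)}+e_f.$$ Consequently the broccoli index satisfies $i_B(C)=0$.
   Context: Curves. Let $r,s\ge 0$. An $(r,s)$-marked curve of degree $\Delta$ is a tuple $C=(\Gamma,h,x_1,\dots,x_{r+s})$ where $\Gamma$ is a metric graph (unbounded edges allowed) each of whose connected components is a tree, and $h:\Gamma\to\mathbb{R}^2$ is continuous, affine on each edge with integral direction vector, and satisfies the balancing condition at each vertex. The $x_1,\dots,x_{r+s}$ are distinct unbounded edges contracted by $h$ (markings; $x_1,\dots,x_r$ real, $x_{r+1},\dots,x_{r+s}$ complex); the other unbounded edges $y_1,\dots,y_n$ (ends, labeled) are not contracted, with outward direction vectors forming $\Delta=(v(y_1),\dots,v(y_n))$. The weight $w(e)$ of a non-contracted edge is the gcd of the coordinates of its direction vector; $e$ is even/odd according to $w(e)$. For a vertex with exactly three adjacent non-contracted edges with direction vectors $u,v,w$, its Mikhalkin multiplicity is $a=|\det(u,v)|$. An oriented curve carries an orientation of every non-contracted edge; $F=\{i:y_i\text{ oriented inwards}\}$ is its set of fixed ends, and $\mathcal{M}^{or}_{(r,s)}(\Delta,F)$ is the set of connected such curves. Old broccoli curves (in the sense of Gathmann–Markwig–Schroeter). An oriented curve is an old broccoli curve if every vertex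 is of one of the types: (1) adjacent to a real marking, with two odd non-contracted edges, both outgoing; (2) unmarked, 3-valent, three odd edges, two incoming, one outgoing; (3) unmarked, 3-valent, with two incoming edges one even and one odd, and one odd outgoing edge; (4) unmarked, 3-valent, three even edges, two incoming, one outgoing; (5) adjacent to a complex marking, with three odd non-contracted edges, all outgoing; (6) adjacent to a complex marking, with one even and two odd non-contracted edges, all outgoing. Broccoli index. For an oriented curve $C$ all of whose vertices are 3-valent unmarked, or adjacent to a real marking and two non-contracted edges, or adjacent to a complex marking and three non-contracted edges: let $V_{cm}$ be the set of vertices adjacent to a complex marking with even Mikhalkin multiplicity, $V_{wcm}$ the set of vertices adjacent to no marking with even Mikhalkin multiplicity, $e_f$ the number of fixed ends of even weight, $e_n$ the number of non-fixed ends of even weight. Then $i_B(C)=-\#V_{cm}-e_f+\#V_{wcm}+e_n$. *)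

From HB Require Import structures.
From mathcomp Require Import all_boot all_order all_algebra.
Set Implicit Arguments. Unset Strict Implicit. Unset Printing Implicit Defensive.
Import Order.TTheory GRing.Theory Num.Theory.

(* Oriented (r,s)-marked plane tropical curves of degree Delta with fixed    *)
(* ends F (the set M^or_(r,s)(Delta,F), connected curves).                  *)
(* The metric graph Gamma is encoded by a finite set V of vertices, a finite *)
(* set E of bounded edges (each with two reference endpoints src/tgt and a   *)
(* positive length) and a finite set L of unbounded edges (legs), each       *)
(* attached to one vertex.  The map h is encoded by the images posx/posy of  *)
(* the vertices and the integral direction vectors dirE (from src to tgt)    *)
(* and dirL (outward, for legs).  Orientations: orE e = true iff the bounded *)
(* edge e is oriented from src e to tgt e; a leg is oriented inwards iff it  *)
(* is a fixed end y_j with j \in F.                                          *)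

Definition zvec := (int * int)%type.

Definition weight (u : zvec) : nat := gcdn `|u.1|%N `|u.2|%N.

Definition det2 (u w : zvec) : int := (u.1 * w.2 - u.2 * w.1)%R.

Record ocurve (R : realFieldType) (r s n : nat) (Delta : 'I_n -> zvec)
    (F : {set 'I_n}) := OCurve {
  cV : finType;
  cE : finType;
  cL : finType;
  src : cE -> cV;
  tgt : cE -> cV;
  legv : cL -> cV;
  len : cE -> R;
  posx : cV -> R;
  posy : cV -> R;
  dirE : cE -> zvec;
  dirL : cL -> zvec;
  mk : 'I_(r + s) -> cL;
  yl : 'I_n -> cL;
  orE : cE -> bool;
  len_pos : forall e, (0 < len e)%R;
  affine_x : forall e, posx (tgt e) = (posx (src e) + len e * (dirE e).1%:~R)%R;
  affine_y : forall e, posy (tgt e) = (posy (src e) + len e * (dirE e).2%:~R)%R;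
  connected : forall u w : cV,
    connect (fun a b => [exists e, ((src e == a) && (tgt e == b))
                                    || ((src e == b) && (tgt e == a))]) u w;
  tree_card : #|cE|.+1 = #|cV|;
  mk_inj : injective mk;
  mk_contr : forall l, (dirL l == (0%R, 0%R)) = (l \in codom mk);
  yl_inj : injective yl;
  yl_noncontr : forall l, (dirL l != (0%R, 0%R)) = (l \in codom yl);
  yl_deg : forall j, dirL (yl j) = Delta j;
  balancing : forall v : cV,
    ((\sum_(e | src e == v) (dirE e).1 - \sum_(e | tgt e == v) (dirE e).1
      + \sum_(l | legv l == v) (dirL l).1 = 0)%R) /\
    ((\sum_(e | src e == v) (dirE e).2 - \sum_(e | tgt e == v) (dirE e).2
      + \sum_(l | legv l == v) (dirL l).2 = 0)%R)
}.

Section Flags.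
Variables (R : realFieldType) (r s n : nat) (Delta : 'I_n -> zvec)
  (F : {set 'I_n}) (C : ocurve R r s Delta F).

(* flags (edge germs at vertices): (e,true) = end src e of e,
   (e,false) = end tgt e of e, inr l = the leg l at its vertex *)
Definition flag := ((cE C * bool) + cL C)%type.

Definition fvert (f : flag) : cV C :=
  match f with
  | inl (e, true) => src e
  | inl (e, false) => tgt e
  | inr l => legv l
  end.

Definition fdir (f : flag) : zvec :=
  match f with
  | inl (e, true) => dirE e
  | inl (e, false) => (- (dirE e).1, - (dirE e).2)%R
  | inr l => dirL l
  end.

Definition leg_in (l : cL C) : bool := [exists j, (yl C j == l) && (j \in F)].

Definition fout (f : flag) : bool :=
  match f with
  | inl (e, true) => orE e
  | inl (e, false) => ~~ orE e
  | inr l => ~~ leg_in l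
  end.

Definition contracted (f : flag) : bool := fdir f == (0%R, 0%R).
Definition odd_flag (f : flag) : bool := odd (weight (fdir f)).
Definition even_flag (f : flag) : bool := ~~ contracted f && ~~ odd (weight (fdir f)).

Definition real_mark (f : flag) : bool :=
  match f with
  | inr l => [exists i : 'I_(r + s), (mk C i == l) && (i < r)%N]
  | _ => false
  end.
Definition cplx_mark (f : flag) : bool :=
  match f with
  | inr l => [exists i : 'I_(r + s), (mk C i == l) && (r <= i)%N]
  | _ => false
  end.

Definition flags_at (v : cV C) : {set flag} := [set f | fvert f == v].
Definition nc_flags_at (v : cV C) : {set flag} :=
  [set f in flags_at v | ~~ contracted f].

Definition cnt (v : cV C) (P : pred flag) : nat := #|[set f in flags_at v | P f]|.

Definition vtype1 v := [&& #|flags_at v| == 3, cnt v real_mark == 1 &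
                           cnt v [pred f | odd_flag f && fout f] == 2].
Definition vtype2 v := [&& #|flags_at v| == 3,
                           cnt v [pred f | odd_flag f && ~~ fout f] == 2 &
                           cnt v [pred f | odd_flag f && fout f] == 1].
Definition vtype3 v := [&& #|flags_at v| == 3,
                           cnt v [pred f | even_flag f && ~~ fout f] == 1,
                           cnt v [pred f | odd_flag f && ~~ fout f] == 1 &
                           cnt v [pred f | odd_flag f && fout f] == 1].
Definition vtype4 v := [&& #|flags_at v| == 3,
                           cnt v [pred f | even_flag f && ~~ fout f] == 2 &
                           cnt v [pred f | even_flag f && fout f] == 1].
Definition vtype5 v := [&& #|flags_at v| == 4, cnt v cplx_mark == 1 &
                           cnt v [pred f | odd_flag f && fout f] == 3].
Definition vtype6 v := [&& #|flags_at v| == 4, cnt v cplx_mark == 1,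
                           cnt v [pred f | even_flag f && fout f] == 1 &
                           cnt v [pred f | odd_flag f && fout f] == 2].

Definition old_broccoli : Prop :=
  forall v, [|| vtype1 v, vtype2 v, vtype3 v, vtype4 v, vtype5 v | vtype6 v].

Definition n_type (P : pred (cV C)) : nat := #|[set v | P v]|.

Definition e_f : nat := #|[set j in F | ~~ odd (weight (dirL (yl C j)))]|.
Definition e_n : nat := #|[set j | (j \notin F) && ~~ odd (weight (dirL (yl C j)))]|.

(* Mikhalkin multiplicity |det(u,v)| of a vertex with exactly three
   non-contracted adjacent edges (0 for other vertices, where it is not used) *)
Definition mikh (v : cV C) : nat :=
  match enum (nc_flags_at v) with
  | [:: f1; f2; _] => `|det2 (fdir f1) (fdir f2)|%N
  | _ => 0
  end.

Definition V_cm : {set cV C} :=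
  [set v | (cnt v cplx_mark > 0)%N && ~~ odd (mikh v)].
Definition V_wcm : {set cV C} :=
  [set v | (cnt v real_mark == 0) && (cnt v cplx_mark == 0) && ~~ odd (mikh v)].

Definition broccoli_index : int :=
  (- (#|V_cm|%:Z) - (e_f%:Z) + (#|V_wcm|%:Z) + (e_n%:Z))%R.

End Flags.

Arguments vtype1 {R r s n Delta F} C v.
Arguments vtype2 {R r s n Delta F} C v.
Arguments vtype3 {R r s n Delta F} C v.
Arguments vtype4 {R r s n Delta F} C v.
Arguments vtype5 {R r s n Delta F} C v.
Arguments vtype6 {R r s n Delta F} C v.
Arguments n_type {R r s n Delta F} C P.
Arguments old_broccoli {R r s n Delta F} C.
Arguments e_f {R r s n Delta F} C.
Arguments e_n {R r s n Delta F} C.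
Arguments broccoli_index {R r s n Delta F} C.

From HB Require Import structures.
From mathcomp Require Import all_boot all_order all_algebra zify.
Set Implicit Arguments. Unset Strict Implicit. Unset Printing Implicit Defensive.
Import Order.TTheory GRing.Theory Num.Theory.

(* Split the even flags at a vertex into incoming and outgoing ones.  Reading
   off the six vertex types, the excess of incoming over outgoing even flags is
   1 at types (3) and (4), -1 at type (6) and 0 otherwise.  Summed over all
   vertices, every even bounded edge contributes one incoming and one outgoing
   flag, while even fixed ends are incoming and even non-fixed ends outgoing, so
   the total excess is e_f - e_n; this is the identity.  Moreover a vertex with
   three non-contracted edges has odd Mikhalkin multiplicity iff all three edges
   are odd, so V_cm consists of the vertices of type (6) and V_wcm of those of
   types (3) and (4), whence i_B(C) = n_(3) + n_(4) + e_n - n_(6) - e_f = 0. *)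

Definition oddz (x : int) : bool := odd `|x|%N.

Lemma oddzE x : oddz x = ~~ (2 %| x)%Z.
Proof. by rewrite /oddz dvdzE dvdn2 negbK. Qed.

Lemma oddzD x y : oddz (x + y)%R = oddz x (+) oddz y.
Proof.
rewrite !oddzE; case: (boolP (2 %| x)%Z) => hx; case: (boolP (2 %| y)%Z) => hy /=;
  by [apply/negP; lia | apply/negPn; lia].
Qed.

Lemma oddzN x : oddz (- x)%R = oddz x.
Proof. by rewrite /oddz abszN. Qed.

Lemma oddzM x y : oddz (x * y)%R = oddz x && oddz y.
Proof. by rewrite /oddz abszM oddM. Qed.

Lemma odd_weight u : odd (weight u) = oddz u.1 || oddz u.2.
Proof.
by rewrite /weight /oddz -[odd _]negbK -dvdn2 dvdn_gcd !dvdn2 negb_and !negbK.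
Qed.

(* Modulo 2, [det2 u w] is nonzero iff [u] and [w] are independent, i.e. iff
   [u], [w] and [u + w = - z] are all nonzero. *)
Lemma odd_det2 (u w z : zvec) :
  (u.1 + w.1 + z.1 = 0)%R -> (u.2 + w.2 + z.2 = 0)%R ->
  odd `|det2 u w|%N = [&& odd (weight u), odd (weight w) & odd (weight z)].
Proof.
case: u w z => [u1 u2] [w1 w2] [z1 z2] /= h1 h2.
have -> : z1 = (- (u1 + w1))%R by lia.
have -> : z2 = (- (u2 + w2))%R by lia.
rewrite !odd_weight /det2 /= -/(oddz _) oddzD oddzN !oddzM !oddzN !oddzD.
by case: (oddz u1); case: (oddz u2); case: (oddz w1); case: (oddz w2).
Qed.

Lemma sum_nat_card (T : finType) (P : pred T) :
  (\sum_(x : T) P x = #|[set x | P x]|)%N.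
Proof. by rewrite -sum1_card [RHS]big_mkcond; apply: eq_bigr => x _; rewrite inE. Qed.

Lemma big_pair_bool (V : Type) (idx : V) (op : Monoid.com_law idx) (T : finType)
    (G : T * bool -> V) :
  \big[op/idx]_p G p = \big[op/idx]_t op (G (t, true)) (G (t, false)).
Proof.
transitivity (\big[op/idx]_p G (p.1, p.2)); first by apply: eq_bigr => -[].
by rewrite -(pair_bigA _ (fun t b => G (t, b))); apply: eq_bigr => t _; rewrite big_bool.
Qed.

Section Curve.
Variables (R : realFieldType) (r s n : nat) (Delta : 'I_n -> zvec)
  (F : {set 'I_n}) (C : ocurve R r s Delta F).

(* The predicates in exactly the form they take inside the vertex types, so
   that [lia] identifies the counts below with those in the types. *)
Local Notation contracted := (@contracted _ _ _ _ _ _ C).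
Local Notation real_mark := (@real_mark _ _ _ _ _ _ C).
Local Notation cplx_mark := (@cplx_mark _ _ _ _ _ _ C).

Implicit Types (v : cV C) (f : flag C) (P : pred (flag C)).

Lemma cntE v P : cnt v P = (\sum_(f in flags_at v) P f)%N.
Proof.
rewrite /cnt -sum1_card big_mkcond [RHS]big_mkcond /=; apply: eq_bigr => f _.
by rewrite inE; case: (f \in _); case: (P f).
Qed.

Lemma sum_cnt P : (\sum_v cnt v P = \sum_f P f)%N.
Proof.
under eq_bigr => v _ do rewrite cntE.
by rewrite [RHS](partition_big (@fvert _ _ _ _ _ _ C) predT) //=; apply: eq_bigr => v _;
  apply: eq_bigl => f; rewrite inE.
Qed.

Lemma contracted_not_odd f : contracted f -> ~~ odd_flag f.
Proof. by rewrite /contracted /odd_flag => /eqP ->. Qed.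

Lemma mark_contracted f : real_mark f || cplx_mark f -> contracted f.
Proof.
case: f => [[e b]|l] //= /orP[] /existsP[i /andP[/eqP <- _]];
  by rewrite /contracted /= mk_contr codom_f.
Qed.

Lemma not_real_and_cplx f : ~~ (real_mark f && cplx_mark f).
Proof.
case: f => [[e b]|l] //=; apply/negP => /andP[/existsP[i /andP[/eqP Ei ri]]].
move=> /existsP[j /andP[/eqP Ej rj]].
have ij : i = j by apply: (@mk_inj _ _ _ _ _ _ C); rewrite Ei Ej.
by move: ri rj; rewrite ij; lia.
Qed.

Definition even_in v := cnt v [pred f | even_flag f && ~~ fout f].
Definition even_out v := cnt v [pred f | even_flag f && fout f].

Lemma card_flags_at_split v :
  #|flags_at v| = (cnt v contracted + cnt v [pred f | odd_flag f && ~~ fout f]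
                   + cnt v [pred f | odd_flag f && fout f] + even_in v + even_out v)%N.
Proof.
rewrite -sum1_card /even_in /even_out !cntE -!big_split /=; apply: eq_bigr => f _.
move: (@contracted_not_odd f); rewrite /even_flag /odd_flag.
by case: (contracted _); case: (odd _); case: (fout _) => // /(_ isT).
Qed.

Lemma cnt_marks_le v : (cnt v real_mark + cnt v cplx_mark <= cnt v contracted)%N.
Proof.
rewrite !cntE -big_split /=; apply: leq_sum => f _.
move: (@mark_contracted f) (not_real_and_cplx f).
by case: (real_mark f); case: (cplx_mark f); case: (contracted f).
Qed.

Lemma card_nc_flags_at v : (#|nc_flags_at v| + cnt v contracted)%N = #|flags_at v|.
Proof.
rewrite -[#|nc_flags_at v|]/(cnt v [pred f | ~~ contracted f]) !cntE -sum1_card.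
by rewrite -big_split; apply: eq_bigr => f _ /=; case: (contracted f).
Qed.

Lemma sum_fdir_at v (pr : zvec -> int) :
    (forall u : zvec, pr (- u.1, - u.2)%R = - pr u)%R ->
  (\sum_(f in flags_at v) pr (fdir f) = \sum_(e | src e == v) pr (dirE e)
     - \sum_(e | tgt e == v) pr (dirE e) + \sum_(l | legv l == v) pr (dirL l))%R.
Proof.
move=> prN; rewrite (eq_bigl (fun f => fvert f == v)) => [|f]; last by rewrite inE.
rewrite big_sumType /=; congr (_ + _)%R.
rewrite big_mkcond big_pair_bool /=.
rewrite [X in (_ = X - _)%R]big_mkcond [X in (_ = _ - X)%R]big_mkcond -sumrB.
apply: eq_bigr => e _; rewrite /= prN.
by case: (src e == v); case: (tgt e == v); rewrite ?addr0 ?add0r ?subr0 ?sub0r.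
Qed.

Lemma balancing_nc_flags v :
  (\sum_(f in nc_flags_at v) (fdir f).1 = 0)%R /\ (\sum_(f in nc_flags_at v) (fdir f).2 = 0)%R.
Proof.
have contracted0 (pr : zvec -> int) : pr (0, 0)%R = 0%R ->
    (\sum_(f in nc_flags_at v) pr (fdir f) = \sum_(f in flags_at v) pr (fdir f))%R.
  move=> pr0; rewrite [RHS](bigID contracted) /= [X in (_ = X + _)%R]big1 ?add0r.
    by apply: eq_bigl => f; rewrite !inE.
  by move=> f /andP[_ /eqP ->].
have [b1 b2] := balancing v.
by rewrite !contracted0 // !sum_fdir_at //= => u; rewrite opprK.
Qed.

Lemma odd_mikh_nc_flags v :
  #|nc_flags_at v| = 3 -> odd (mikh v) = [forall f in nc_flags_at v, odd_flag f].
Proof.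
move=> nc3; have [b1 b2] := balancing_nc_flags v.
have mem_nc := mem_enum (nc_flags_at v).
move: nc3 mem_nc b1 b2; rewrite cardE /mikh -!big_enum.
case: (enum (nc_flags_at v)) => [|f1 [|f2 [|f3 [|]]]] //= _ mem_nc.
rewrite !big_cons !big_nil => b1 b2.
rewrite (@odd_det2 _ _ (fdir f3)); try lia.
apply/and3P/forall_inP => [[o1 o2 o3] f|odd_nc].
  by rewrite -mem_nc !inE => /or3P[] /eqP ->.
by split; apply: odd_nc; rewrite -mem_nc !inE eqxx ?orbT.
Qed.

Lemma odd_mikh v : #|nc_flags_at v| = 3 -> odd (mikh v) = (even_in v + even_out v == 0)%N.
Proof.
move/odd_mikh_nc_flags ->; rewrite /even_in /even_out !cntE -big_split sum_nat_eq0 /=.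
apply/forall_inP/forall_inP => odd_nc f f_v.
  rewrite /even_flag; case: (boolP (contracted f)) => //= nc.
  by have := odd_nc f; rewrite inE f_v nc /odd_flag => /(_ isT) ->.
move: f_v; rewrite inE => /andP[f_v nc]; move: (odd_nc f f_v).
by rewrite /even_flag nc /odd_flag; case: (odd _); case: (fout f).
Qed.

(* Each vertex type determines all the flag counts at [v]. *)
Lemma old_broccoli_vertex v :
    [|| vtype1 C v, vtype2 C v, vtype3 C v, vtype4 C v, vtype5 C v | vtype6 C v] ->
  [/\ (even_in v + vtype6 C v = even_out v + vtype3 C v + vtype4 C v)%N,
      (v \in V_cm C) = vtype6 C v &
      (v \in V_wcm C) = vtype3 C v + vtype4 C v :> nat].
Proof.
have := card_flags_at_split v; have := cnt_marks_le v; have := card_nc_flags_at v.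
have := @odd_mikh v.
rewrite /vtype1 /vtype2 /vtype3 /vtype4 /vtype5 /vtype6 /V_cm /V_wcm !inE /even_in /even_out.
by move=> ? ? ? ? /orP[|/orP[|/orP[|/orP[|/orP[]]]]] ?; split; lia.
Qed.

Lemma even_flag_tgt e : even_flag (inl (e, false) : flag C) = even_flag (inl (e, true) : flag C).
Proof. by rewrite /even_flag /contracted /weight /= !abszN !xpair_eqE !oppr_eq0. Qed.

Lemma leg_in_yl j : leg_in (yl C j) = (j \in F).
Proof.
apply/existsP/idP => [[i /andP[/eqP /(@yl_inj _ _ _ _ _ _ C) -> //]]|jF].
by exists j; rewrite eqxx.
Qed.

Lemma even_flag_yl j : even_flag (inr (yl C j) : flag C) = ~~ odd (weight (dirL (yl C j))).
Proof. by rewrite /even_flag /contracted /= yl_noncontr codom_f. Qed.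

Lemma card_even_legs (P : pred bool) :
  #|[set l | even_flag (inr l : flag C) && P (leg_in l)]|
  = #|[set j | P (j \in F) && ~~ odd (weight (dirL (yl C j)))]|.
Proof.
rewrite -(card_imset _ (@yl_inj _ _ _ _ _ _ C)); apply: eq_card => l; rewrite inE.
have [/codomP[j ->]|l_contr] := boolP (l \in codom (yl C)).
  by rewrite mem_imset; [rewrite inE even_flag_yl leg_in_yl andbC | exact: yl_inj].
rewrite /even_flag /contracted /= -yl_noncontr negbK in l_contr.
rewrite /even_flag /contracted /= l_contr; apply/esym/imsetP => -[j _ l_yl].
by have := yl_noncontr (yl C j); rewrite codom_f -l_yl l_contr.
Qed.

Lemma sum_flags (G : flag C -> nat) :
  (\sum_f G f = \sum_e (G (inl (e, true)) + G (inl (e, false))) + \sum_l G (inr l))%N.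
Proof. by rewrite big_sumType big_pair_bool. Qed.

Lemma sum_even_in_out : (\sum_v even_in v + e_n C = \sum_v even_out v + e_f C)%N.
Proof.
rewrite /even_in /even_out !sum_cnt !sum_flags /=.
have edges : (\sum_e (even_flag (inl (e, true) : flag C) && ~~ orE e
                     + even_flag (inl (e, false) : flag C) && ~~ ~~ orE e)
  = \sum_e (even_flag (inl (e, true) : flag C) && orE e
            + even_flag (inl (e, false) : flag C) && ~~ orE e))%N.
  by apply: eq_bigr => e _; rewrite even_flag_tgt; case: (even_flag _); case: (orE e).
rewrite edges /e_f /e_n -(card_even_legs id) -(card_even_legs negb) -!sum_nat_card.
have legs_fixed : (\sum_l even_flag (inr l : flag C) && ~~ ~~ leg_in l
               = \sum_l even_flag (inr l : flag C) && leg_in l)%N.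
  by apply: eq_bigr => l _; rewrite negbK.
lia.
Qed.
End Curve.

Theorem lemma3p6 (R : realFieldType) (r s n : nat) (Delta : 'I_n -> zvec)
    (F : {set 'I_n}) (C : ocurve R r s Delta F) :
  old_broccoli C ->
  (n_type C (vtype3 C) + n_type C (vtype4 C) + e_n C = n_type C (vtype6 C) + e_f C)%N
  /\ broccoli_index C = 0%R.
Proof.
move=> broccoli; have vertex v := old_broccoli_vertex (broccoli v).
have sum_vertex : (\sum_(v : cV C) even_in v + \sum_v vtype6 C v
                   = \sum_(v : cV C) even_out v + \sum_v vtype3 C v + \sum_v vtype4 C v)%N.
  by rewrite -!big_split; apply: eq_bigr => v _; case: (vertex v).
have card_cm : #|V_cm C| = (\sum_v vtype6 C v)%N.
  by rewrite -cardsE -sum_nat_card; apply: eq_bigr => v _; case: (vertex v) => _ ->.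
have card_wcm : #|V_wcm C| = (\sum_v vtype3 C v + \sum_v vtype4 C v)%N.
  by rewrite -cardsE -sum_nat_card -big_split; apply: eq_bigr => v _; case: (vertex v) => _ _ ->.
have := sum_even_in_out C.
rewrite /broccoli_index card_cm card_wcm /n_type -!sum_nat_card; split; lia.
Qed.
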